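(* Let $c\in[\frac12,1)$ and let $d,\delta$ be positive integers with $d\ge\delta+3$. Let $G$ be a connected paw-friendly graph with maximum degree $\delta$ and $w:V(G)\to[0,1]$ a weight function with $w(V(G))=1$, and assume $G$ has no $d$-bounded $(w,c)$-balanced separator. Fix a bijection $\mathcal{O}:V(G)\to\{1,\dots,|V(G)|\}$, let $X$ be the set of minimal elements of $\le_A$, and let $\beta$ be the star-free bag of $G$. Then: (i) $\beta=X$ and $G[\beta]$ is bipartite; (ii) if $(X_1,X_2)$ is a bipartition of $G[\beta]$, then for $i=1,2$ the set $\mathcal{S}_i=\{S_x: x\in X_i\}$ is loosely laminar.
   Context: For $X\subseteq V(G)$, $w(X)=\sum_{x\in X}w(x)$; $N[v]$ is the closed neighborhood; $N^d[v]$ the set of vertices at distance at most $d$ from $v$. $X$ is $d$-bounded if $X\subseteq N^d[v]$ for some $v$; $X$ is a $(w,c)$-balanced separator if every component $D$ of $G\setminus X$ has $w(D)\le c$. A paw is the graph with vertices $v_1,\dots,v_4$ and edges $v_1v_2,v_2v_3,v_3v_4,v_2v_4$. For a graph $H$, $x\in V(H)$ breaks $Y\subseteq V(H)\setminus\{x\}$ (in $H$) if for every connected component $D$ of $H\setminus N_H[x]$, $Y\not\subseteq N_H[D]$ ($N_H[D]$ being $D$ plus its neighbors). $G$ is paw-friendly if $G$ is perfect and for every induced subgraph $H$ and every induced paw in $H$ with vertex set $\{c,a,b_1,b_2\}$ and edges $\{ab_1,ab_2,b_1b_2,ac\}$, either $a$ breaks $\{c,b_1,b_2\}$, or $b_1$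 breaks $\{c,b_2\}$, or $b_2$ breaks $\{c,b_1\}$ in $H$. For $v\in V(G)$, the canonical star separation $S_v=(A_v,C_v,B_v)$: $B_v$ is the largest-weight connected component of $G\setminus N[v]$ (unique under these assumptions), $C_v$ consists of $v$ and every neighbor of $v$ with a neighbor in $B_v$, $A_v=V(G)\setminus(B_v\cup C_v)$. $u,v$ are star twins if $B_u=B_v$, $C_u\setminus\{u\}=C_v\setminus\{v\}$, $A_u\setminus\{v\}=A_v\setminus\{u\}$. $x\le_A y$ iff $x=y$, or $x,y$ are star twins and $\mathcal{O}(x)<\mathcal{O}(y)$, or $x,y$ are not star twins and $y\in A_x$ (a partial order). The star-free bag is $\beta=\bigcap_{x\in X}(B_x\cup C_x)$. Separations $S,S'$ (triples $(A,C,B)$) are loosely non-crossing if $A(S)\cap C(S')=\emptyset=A(S')\cap C(S)$; a set of separations is loosely laminar if every two are loosely non-crossing. *)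

From HB Require Import structures.
From mathcomp Require Import all_boot all_order all_algebra.
From mathcomp Require Import reals.
Set Implicit Arguments. Unset Strict Implicit. Unset Printing Implicit Defensive.
Import Order.TTheory GRing.Theory Num.Theory.

Definition simple_graph (T : finType) (e : rel T) : Prop :=
  symmetric e /\ irreflexive e.

Section Graphs.
Variable T : finType.
Variable e : rel T.

Definition nbhd (v : T) : {set T} := [set u | e v u].
Definition cnbhd (v : T) : {set T} := v |: nbhd v.
Definition degree (v : T) : nat := #|nbhd v|.

Fixpoint ball (v : T) (k : nat) : {set T} :=
  if k is k'.+1 then
    ball v k' :|: [set u | [exists y in ball v k', e y u]]
  else [set v].

Definition connected_graph : Prop := forall x y : T, connect e x y.

Definition induced_rel (S : {set T}) : rel T :=
  [rel a b | [&& a \in S, b \in S & e a b]].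
Definition comp (S : {set T}) (x : T) : {set T} :=
  [set y in S | connect (induced_rel S) x y].

Definition nbhdH (S : {set T}) (x : T) : {set T} := x |: [set u in S | e x u].
Definition nbhdH_set (S : {set T}) (D : {set T}) : {set T} :=
  D :|: [set u in S | [exists y in D, e y u]].

Definition breaks (S : {set T}) (x : T) (Y : {set T}) : Prop :=
  forall z, z \in S :\: nbhdH S x ->
    ~~ (Y \subset nbhdH_set S (comp (S :\: nbhdH S x) z)).

Definition is_clique (K : {set T}) : bool :=
  [forall x in K, forall y in K, (x != y) ==> e x y].
Definition clique_number (S : {set T}) : nat :=
  \max_(K : {set T} | (K \subset S) && is_clique K) #|K|.
Definition colorable (S : {set T}) (k : nat) : Prop :=
  exists f : T -> nat, (forall x, x \in S -> f x < k) /\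
    (forall x y, x \in S -> y \in S -> e x y -> f x != f y).
Definition is_chromatic_number (S : {set T}) (k : nat) : Prop :=
  colorable S k /\ forall j, colorable S j -> k <= j.
Definition perfect : Prop :=
  forall S : {set T}, is_chromatic_number S (clique_number S).

Definition paw_friendly : Prop :=
  perfect /\
  forall (S : {set T}) (c a b1 b2 : T),
    c \in S -> a \in S -> b1 \in S -> b2 \in S ->
    uniq [:: c; a; b1; b2] ->
    e a b1 -> e a b2 -> e b1 b2 -> e a c -> ~~ e c b1 -> ~~ e c b2 ->
    breaks S a [set c; b1; b2] \/ breaks S b1 [set c; b2] \/
    breaks S b2 [set c; b1].

Definition is_bipartition (S X1 X2 : {set T}) : Prop :=
  X1 :|: X2 = S /\ X1 :&: X2 = set0 /\
  (forall x y, x \in X1 -> y \in X1 -> ~~ e x y) /\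
  (forall x y, x \in X2 -> y \in X2 -> ~~ e x y).
Definition bipartite (S : {set T}) : Prop :=
  exists X1 X2, is_bipartition S X1 X2.

Definition separation := ({set T} * {set T} * {set T})%type.
Definition sepA (s : separation) : {set T} := s.1.1.
Definition sepC (s : separation) : {set T} := s.1.2.
Definition sepB (s : separation) : {set T} := s.2.
Definition loosely_noncrossing (s s' : separation) : Prop :=
  sepA s :&: sepC s' = set0 /\ sepA s' :&: sepC s = set0.
Definition loosely_laminar (I : {set T}) (S : T -> separation) : Prop :=
  forall x y, x \in I -> y \in I -> loosely_noncrossing (S x) (S y).

Variable R : realType.
Variable w : T -> R.

Definition wt (X : {set T}) : R := (\sum_(x in X) w x)%R.

Definition bounded (d : nat) (X : {set T}) : Prop :=
  exists v, X \subset ball v d.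
Definition balanced_separator (c : R) (X : {set T}) : Prop :=
  forall z, z \notin X -> (wt (comp (~: X) z) <= c)%R.

(* B_v: the largest-weight component of G \ N[v] (written as the set of all
   vertices lying in a component of maximum weight; it is the unique such
   component under the paper's hypotheses). *)
Definition starB (v : T) : {set T} :=
  [set z | (z \notin cnbhd v) &&
     [forall y, (y \notin cnbhd v) ==>
        (wt (comp (~: cnbhd v) y) <= wt (comp (~: cnbhd v) z))%R]].
Definition starC (v : T) : {set T} :=
  v |: [set u in nbhd v | [exists y in starB v, e u y]].
Definition starA (v : T) : {set T} := ~: (starB v :|: starC v).
Definition star_sep (v : T) : separation := (starA v, starC v, starB v).

Definition star_twins (u v : T) : bool :=
  [&& starB u == starB v, starC u :\ u == starC v :\ v &
      starA u :\ v == starA v :\ u].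

Variable O : T -> nat.
Definition leA (x y : T) : bool :=
  [|| x == y, star_twins x y && (O x < O y) |
      ~~ star_twins x y && (y \in starA x)].
Definition minimalA : {set T} :=
  [set x | [forall y, leA y x ==> (y == x)]].
Definition star_free_bag : {set T} :=
  \bigcap_(x in minimalA) (starB x :|: starC x).

End Graphs.

From Pilot Require Import Defs.
From HB Require Import structures.
From mathcomp Require Import all_boot all_order all_algebra.
From mathcomp Require Import reals.
From mathcomp Require Import lra zify.
Set Implicit Arguments. Unset Strict Implicit. Unset Printing Implicit Defensive.
Import Order.TTheory GRing.Theory Num.Theory.

(* Since G has no d-bounded (w,c)-balanced separator and N[v] is 1-bounded, some
   component of G - N[v] weighs more than c >= 1/2; it is B_v, and any two sets of
   weight > c meet.  So B_v is the heavy component containing any heavy connected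
   set avoiding N[v]; in particular u \in A_v gives B_v \subset B_u, with equality
   only for star twins.  Ranking x by (|B_x|, O x) lexicographically makes every
   strict <=_A step increase the rank, so each vertex outside the set X of minimal
   elements lies in A_m for some m \in X, while no minimal element lies in the
   A-side of another; this gives beta = X, and A_x meets C_y for no two
   non-adjacent x, y \in X, hence loose laminarity of independent subsets of X.
   Finally G[X] has no triangle K: K together with its common neighbours lies
   within distance 2 of one vertex, so, as 3 <= d, some heavy component beyond
   their closed neighbourhoods lies in B_t for all of them; it is entered from a
   vertex p forming a paw with two vertices of K and either the third one or a
   common neighbour, and each of the three breaking options of that paw is
   refuted by this component.  As G is perfect,
   omega(G[X]) <= 2 yields a bipartition. *)

Section InducedComponents.
Variables (T : finType) (e : rel T).
Hypothesis esym : symmetric e.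
Implicit Types (S D : {set T}) (x y z u : T).

Local Notation comp := (Defs.comp e).

Lemma induced_rel_sym S : symmetric (induced_rel e S).
Proof. by move=> x y; rewrite /induced_rel /= esym andbCA. Qed.

Lemma comp_sub S z : comp S z \subset S.
Proof. by apply/subsetP=> y /setIdP[]. Qed.

Lemma comp_self S z : z \in S -> z \in comp S z.
Proof. by move=> zS; rewrite inE zS connect0. Qed.

Lemma comp_of_mem S z y : y \in comp S z -> comp S y = comp S z.
Proof.
case/setIdP=> _ zy; apply/setP=> u; rewrite !inE.
by rewrite (same_connect (sym_connect_sym (induced_rel_sym S)) zy).
Qed.

Lemma comp_closed S z y u : y \in comp S z -> u \in S -> e y u -> u \in comp S z.
Proof.
move=> yz uS eyu; case/setIdP: (yz) => yS zy.
rewrite inE uS; apply: connect_trans zy (connect1 _).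
by rewrite /induced_rel /= yS uS.
Qed.

Lemma comp_disjoint S y z : comp S y = comp S z \/ [disjoint comp S y & comp S z].
Proof.
case: (boolP [disjoint _ & _]) => [|/pred0Pn[u /andP[uy uz]]]; first by right.
by left; rewrite -(comp_of_mem uy) (comp_of_mem uz).
Qed.

Lemma comp_subset_comp S S' z : comp S z \subset S' -> comp S z \subset comp S' z.
Proof.
move=> sub; apply/subsetP=> y yz; rewrite inE (subsetP sub _ yz) /=.
have in_sub t : t \in S -> connect (induced_rel e S) z t -> t \in S'.
  by move=> tS zt; apply: (subsetP sub); rewrite inE tS.
case/setIdP: yz => _ /connectP[p zp ->] {y}.
elim/last_ind: p zp => [|p y IH]; first by rewrite connect0.
rewrite rcons_path last_rcons => /andP[zp /and3P[pS yS epy]].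
have zl : connect (induced_rel e S) z (last z p) by apply/connectP; exists p.
apply: connect_trans (IH zp) (connect1 _).
rewrite /induced_rel /= epy !in_sub //; apply: connect_trans zl (connect1 _).
by rewrite /induced_rel /= pS yS.
Qed.

Lemma connect_exit D a b : a \in D -> b \notin D -> connect e a b ->
  exists u p, [/\ u \in D, p \notin D & e u p].
Proof.
move=> aD bD /connectP[p ap bE].
elim: p a ap aD bE => [|q p IH] a /=; first by move=> _ aD bE; rewrite bE aD in bD.
case/andP=> eaq qp aD bE.
by case: (boolP (q \in D)) => qD; [exact: IH qD bE | exists a, q].
Qed.
End InducedComponents.

Section GraphBasics.
Variables (T : finType) (e : rel T).
Implicit Types D K S : {set T}.

Lemma ball_self v : v \in ball e v 0.
Proof. exact: set11. Qed.

Lemma ball_mono v k k' : k <= k' -> ball e v k \subset ball e v k'.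
Proof.
move/subnKC <-; elim: (k' - k) => [|n IH]; first by rewrite addn0.
by rewrite addnS; apply: subset_trans IH (subsetUl _ _).
Qed.

Lemma ball_adj v k u t : u \in ball e v k -> e u t -> t \in ball e v k.+1.
Proof. by move=> uv eut; rewrite /= !inE; apply/orP; right; apply/exists_inP; exists u. Qed.

Lemma cnbhd_sub_ball v k s : s \in ball e v k -> cnbhd e s \subset ball e v k.+1.
Proof.
move=> sv; apply/subsetP=> t /setU1P[->|]; first exact: (subsetP (ball_mono v (leqnSn k))).
by rewrite inE; apply: ball_adj sv.
Qed.
Lemma cliqueP K : is_clique e K -> {in K &, forall x y, x != y -> e x y}.
Proof. by move=> /forall_inP clK x y xK yK; have /forall_inP/(_ y yK)/implyP := clK x xK. Qed.

Lemma bipartite_of_colorable2 S : colorable e S 2 -> bipartite e S.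
Proof.
case=> f [f_lt f_prop]; exists [set t in S | f t == 0], [set t in S | f t != 0].
split; [|split; [|split]].
- by apply/setP=> t; rewrite !inE -andb_orr orbN andbT.
- by apply/setP=> t; rewrite !inE; case: (t \in S); case: (f t == 0).
- move=> x y /setIdP[xS /eqP fx] /setIdP[yS /eqP fy]; apply/negP=> exy.
  by have := f_prop x y xS yS exy; rewrite fx fy.
- move=> x y /setIdP[xS fx] /setIdP[yS fy]; apply/negP=> exy.
  move: (f_lt x xS) (f_lt y yS) fx fy (f_prop x y xS yS exy).
  by case: (f x) => [|[|]] //; case: (f y) => [|[|]].
Qed.

Definition touches D u : bool := [exists y in D, e u y].

Lemma touchesP D u : reflect (exists2 y, y \in D & e u y) (touches D u).
Proof. exact: exists_inP. Qed.
End GraphBasics.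

Section Weights.
Local Open Scope ring_scope.
Variables (T : finType) (R : realType) (w : T -> R) (c : R).
Hypotheses (w_ge0 : forall x, 0 <= w x) (wT : wt w [set: T] = 1).
Hypothesis c_ge_half : 2%:R^-1 <= c.
Implicit Types A B : {set T}.

Lemma wt_le A B : A \subset B -> wt w A <= wt w B.
Proof.
move=> AB; rewrite /wt [leRHS](big_setID A) (setIidPr AB) lerDl.
exact: sumr_ge0.
Qed.

Lemma wt_setC A : wt w (~: A) = 1 - wt w A.
Proof. by rewrite -wT /wt [in RHS](big_setID A) setTI setTD addrC addKr. Qed.

Lemma disjoint_heavy_wt_lt A B : [disjoint A & B] -> c < wt w B -> wt w A < c.
Proof.
rewrite disjoints_subset => /wt_le; rewrite wt_setC => AB hB.
have := c_ge_half; lra.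
Qed.
End Weights.

(** * The heavy component B_v and the star separation S_v *)

Section StarSeparations.
Variables (T : finType) (e : rel T) (R : realType) (w : T -> R) (c : R) (d : nat).
Hypotheses (esym : symmetric e) (eirr : irreflexive e).
Hypotheses (w_ge0 : forall x, (0 <= w x)%R) (wT : wt w [set: T] = 1%R).
Hypothesis c_ge_half : (2%:R^-1 <= c)%R.
Hypothesis d_gt0 : 0 < d.
Hypothesis no_sep : forall X : {set T}, bounded e d X -> ~ balanced_separator e w c X.
Implicit Types (D K S Y : {set T}) (u v x y z : T).

Local Notation N := (cnbhd e).
Local Notation comp := (Defs.comp e).
Local Notation B := (starB e w).
Local Notation C := (starC e w).
Local Notation A := (starA e w).
Local Notation touches := (touches e).
Local Notation heavy X := (c < wt w X)%R.

Lemma cnbhdE v u : (u \in N v) = (u == v) || e v u.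
Proof. by rewrite !inE. Qed.

Lemma edge_neq u v : e u v -> u != v.
Proof. by apply: contraTneq => ->; rewrite eirr. Qed.

Lemma heavy_comp_exists Y v : Y \subset ball e v d ->
  exists2 z, z \notin Y & heavy (comp (~: Y) z).
Proof.
move=> Yv; case: (pickP [pred z | (z \notin Y) && heavy (comp (~: Y) z)]).
  by move=> z /andP[]; exists z.
move=> none; case: (no_sep (X := Y)); first by exists v.
move=> z zY; rewrite leNgt; apply/negP=> hz.
by have := none z; rewrite /= zY hz.
Qed.

Lemma starB_heavy v z : z \notin N v -> heavy (comp (~: N v) z) ->
  B v = comp (~: N v) z.
Proof.
move=> zN hz; apply/setP=> t; rewrite inE; apply/andP/idP.
  case=> tN /forallP/(_ z); rewrite zN /= => le_zt.
  case: (comp_disjoint esym (~: N v) t z) => [<-|dj].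
    by apply: comp_self; rewrite inE.
  have := disjoint_heavy_wt_lt w_ge0 wT c_ge_half dj hz.
  by rewrite ltNge (ltW (lt_le_trans hz le_zt)).
move=> tz; split; first by have := subsetP (comp_sub e _ z) t tz; rewrite inE.
rewrite (comp_of_mem esym tz); apply/forallP=> y; apply/implyP=> yN.
case: (comp_disjoint esym (~: N v) y z) => [->//|dj].
exact/ltW/(lt_trans (disjoint_heavy_wt_lt w_ge0 wT c_ge_half dj hz)).
Qed.

Lemma starB_exists v :
  exists z, [/\ z \notin N v, B v = comp (~: N v) z & heavy (comp (~: N v) z)].
Proof.
have Nv : N v \subset ball e v d.
  exact: subset_trans (cnbhd_sub_ball (ball_self e v)) (ball_mono e v d_gt0).
have [z zN hz] := heavy_comp_exists Nv.
by exists z; split=> //; apply: starB_heavy.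
Qed.

Lemma starB_cnbhd v y : y \in B v -> y \notin N v.
Proof. by rewrite inE => /andP[]. Qed.

Lemma starB_comp v u : u \in B v -> B v = comp (~: N v) u.
Proof. by have [z [_ -> _]] := starB_exists v => /comp_of_mem ->. Qed.

Lemma starB_closed v y u : y \in B v -> u \notin N v -> e y u -> u \in B v.
Proof.
move=> yB uN eyu; have BE := starB_comp yB; rewrite BE in yB *.
by apply: comp_closed yB _ eyu; rewrite inE.
Qed.

Lemma comp_sub_starB v D z : z \in D -> comp D z \subset ~: N v ->
  heavy (comp D z) -> comp D z \subset B v.
Proof.
move=> zD sub hz; have zN : z \notin N v by rewrite -in_setC (subsetP sub) ?comp_self.
have sub_comp := comp_subset_comp sub.
by rewrite (starB_heavy zN) // (lt_le_trans hz (wt_le w_ge0 sub_comp)).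
Qed.

Lemma starB_sub u v : B u \subset ~: N v -> B u \subset B v.
Proof.
have [z [zN -> hz]] := starB_exists u => sub.
by apply: comp_sub_starB sub hz; rewrite inE.
Qed.

Lemma starCE v u : (u \in C v) = (u == v) || e v u && touches (B v) u.
Proof. by rewrite !inE. Qed.

Lemma starB_nadj v y : y \in B v -> (y != v) && ~~ e v y.
Proof. by move/starB_cnbhd; rewrite cnbhdE negb_or. Qed.

Lemma touches_starB_self v : ~~ touches (B v) v.
Proof. by apply/touchesP=> -[y /starB_nadj/andP[_ /negP]]. Qed.

Lemma touches_starB_adj v u : u \notin B v -> u != v -> touches (B v) u -> e v u.
Proof.
move=> uB uv /touchesP[y yB euy]; apply/negPn/negP=> nvu.
by move/negP: uB; apply; apply: starB_closed yB _ _; rewrite ?cnbhdE ?negb_or ?uv // esym.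
Qed.

Lemma starC_D1 v t : t != v -> (t \in C v) = (t \notin B v) && touches (B v) t.
Proof.
move=> tv; rewrite starCE (negbTE tv) /=.
apply/andP/andP=> [[evt tt]|[tB tt]]; split=> //.
  by apply/negP=> /starB_nadj; rewrite evt andbF.
exact: touches_starB_adj tB tv tt.
Qed.

Lemma starC_self v : v \in C v.
Proof. by rewrite starCE eqxx. Qed.

Lemma starAP v u :
  reflect [/\ u != v, u \notin B v & ~~ touches (B v) u] (u \in A v).
Proof.
rewrite in_setC in_setU negb_or.
case: (eqVneq u v) => [->|uv].
  by rewrite starC_self andbF; constructor; case=> /eqP.
rewrite starC_D1 //; apply: (iffP andP) => [[uB ut]|[_ uB ut]]; split=> //.
  by apply: contra ut => ->; rewrite uB.
by rewrite (negbTE ut) andbF.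
Qed.

Lemma starA_starB v u : u \in A v -> B v \subset B u.
Proof.
case/starAP=> _ uB ut; apply: starB_sub; apply/subsetP=> y yB.
rewrite in_setC cnbhdE negb_or; apply/andP; split.
  by apply: contraNneq uB => <-; exact: yB.
by apply: contra ut => euy; apply/touchesP; exists y; [exact: yB | exact: euy].
Qed.

Lemma starA_trans t m v : m \in A t -> v \in A m -> v != t -> v \in A t.
Proof.
move=> mt /starAP[_ vB vt] vt'; have sub := starA_starB mt.
apply/starAP; split; [exact: vt' | exact: contra (subsetP sub v) vB |].
apply: contra vt => /touchesP[y yB evy].
by apply/touchesP; exists y; [exact: (subsetP sub _ yB) | exact: evy].
Qed.

Lemma in_starC_setD1 v t : (t \in C v :\ v) = (t \notin B v) && touches (B v) t.
Proof.
rewrite in_setD1; case: (eqVneq t v) => [->|tv]; last exact: starC_D1.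
by rewrite (negbTE (touches_starB_self v)) andbF.
Qed.

Lemma star_twins_sym u v : star_twins e w u v = star_twins e w v u.
Proof.
by apply/and3P/and3P=> -[/eqP h1 /eqP h2 /eqP h3]; split; apply/eqP; apply: Logic.eq_sym.
Qed.

Lemma star_twins_starA u v : star_twins e w u v -> u != v -> v \in A u.
Proof.
case/and3P=> /eqP BE _ _ uv; apply/starAP; rewrite BE; split.
- by rewrite eq_sym.
- by apply/negP=> /starB_nadj; rewrite eqxx.
- exact: touches_starB_self.
Qed.

Lemma star_twins_of_starB u v : u != v -> B u = B v -> star_twins e w u v.
Proof.
move=> uv BE; apply/and3P; split; first exact/eqP.
  by apply/eqP/setP=> t; rewrite [RHS]in_starC_setD1 -BE in_starC_setD1.
apply/eqP/setP=> t.
apply/setD1P/setD1P=> -[tv /starAP[tu tB tt]]; split; try exact: tu; apply/starAP.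
  by split; [exact: tv | rewrite -BE; exact: tB | rewrite -BE; exact: tt].
by split; [exact: tv | rewrite BE; exact: tB | rewrite BE; exact: tt].
Qed.

Lemma starA_notin_starC v u : u \in A v -> u \notin C v.
Proof. by case/starAP=> uv _ ut; rewrite (starC_D1 uv) (negbTE ut) andbF. Qed.

(** * Minimal elements of <=_A and the star-free bag *)

Variable O : T -> nat.
Hypothesis O_inj : injective O.

Local Notation leA := (leA e w O).
Local Notation X := (minimalA e w O).

(* The pair (#|B x|, O x), ordered lexicographically. *)
Definition star_rank x := #|B x| * (\max_y O y).+1 + O x.

Lemma leA_starA t u : leA t u -> t != u -> u \in A t /\ star_rank t < star_rank u.
Proof.
case/or3P=> [/eqP->|/andP[tw lt]|/andP[ntw uA]] tu; first by rewrite eqxx in tu.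
  split; first exact: star_twins_starA.
  by case/and3P: tw => /eqP BE _ _; rewrite /star_rank BE ltn_add2l.
split; first exact: uA.
have BtBu : B t \proper B u.
  rewrite properEneq (starA_starB uA) andbT.
  by apply: contra ntw => /eqP/(star_twins_of_starB tu).
have Ot : O t <= \max_y O y := leq_bigmax t.
have : (#|B t|).+1 * (\max_y O y).+1 <= #|B u| * (\max_y O y).+1.
  by rewrite leq_mul2r proper_card ?orbT.
rewrite /star_rank; lia.
Qed.

Lemma leA_twins_total u v : u != v -> star_twins e w u v -> leA u v || leA v u.
Proof.
move=> uv tw; have tw' : star_twins e w v u by rewrite star_twins_sym.
case: (ltngtP (O u) (O v)) => [lt|gt|E]; last by rewrite (O_inj E) eqxx in uv.
  by apply/orP; left; apply/or3P/Or32/andP; split; [exact: tw | exact: lt].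
by apply/orP; right; apply/or3P/Or32/andP; split; [exact: tw' | exact: gt].
Qed.

Lemma minimalA_leA x y : x \in X -> leA y x -> y = x.
Proof. by rewrite inE => /forallP/(_ y)/implyP H /H/eqP. Qed.

Lemma minimalA_notin_starA x m : x \in X -> m \in X -> x \notin A m.
Proof.
move=> xX mX; case: (eqVneq x m) => [->|xm]; first by apply/negP=> /starAP[/eqP].
have [tw|ntw] := boolP (star_twins e w m x).
  have mx : m != x by rewrite eq_sym.
  case/orP: (leA_twins_total mx tw) => [/(minimalA_leA xX)|/(minimalA_leA mX)] E;
    by rewrite E eqxx in xm.
apply/negP=> xA; have lmx : leA m x.
  by apply/or3P/Or33/andP; split; [exact: ntw | exact: xA].
by move: xm; rewrite (minimalA_leA xX lmx) eqxx.
Qed.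

Lemma minimalA_touches a b : a \in X -> b \in X -> e a b -> touches (B a) b.
Proof.
move=> aX bX eab; apply: contraR (minimalA_notin_starA bX aX) => nt.
apply/starAP; split; [by rewrite eq_sym edge_neq | | exact: nt].
by apply/negP=> /starB_nadj/andP[_ /negP[]]; exact: eab.
Qed.

Lemma minimalA_touches_back a s : a \in X -> e a s -> touches (B a) s -> touches (B s) a.
Proof.
move=> aX eas tas; have as' : a != s := edge_neq eas.
apply: contraT => nt.
have [tw|ntw] := boolP (star_twins e w s a).
  rewrite star_twins_sym in tw.
  by case/starAP: (star_twins_starA tw as') => _ _; rewrite tas.
have aA : a \in A s.
  apply/starAP; split; [exact: as' | | exact: nt].
  by apply/negP=> /starB_nadj/andP[_ /negP[]]; rewrite esym; exact: eas.
have lsa : leA s a by apply/or3P/Or33/andP; split; [exact: ntw | exact: aA].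
by move: as'; rewrite (minimalA_leA aX lsa) eqxx.
Qed.

Lemma not_minimalA t : t \notin X -> exists s, t \in A s /\ star_rank s < star_rank t.
Proof.
rewrite inE => /forallPn[s]; rewrite negb_imply => /andP[lst st].
by exists s; apply: leA_starA lst st.
Qed.

Lemma starA_minimalA v : v \notin X -> exists2 m, m \in X & v \in A m.
Proof.
move=> vX; have [s [vAs _]] := not_minimalA vX.
have [m vAm min_m] := arg_minnP (P := fun m => v \in A m) star_rank vAs.
exists m; last exact: vAm.
apply/negPn/negP=> /not_minimalA[t [mAt ltm]].
have [t' [vAt' lt']] : exists t', v \in A t' /\ star_rank t' < star_rank m.
  case: (eqVneq v t) => [vt|vt].
    have [s' [vAs' lts']] := not_minimalA vX.
    by exists s'; split; [exact: vAs' | rewrite vt in lts'; exact: ltn_trans lts' ltm].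
  by exists t; split; [exact: starA_trans mAt vAm vt | exact: ltm].
by have := min_m t' vAt'; rewrite leqNgt lt'.
Qed.

Lemma star_free_bag_minimalA : star_free_bag e w O = X.
Proof.
apply/setP=> v; apply/bigcapP/idP=> [vb|vX m mX].
  apply/negPn/negP=> /starA_minimalA[m mX].
  by rewrite in_setC => /negP; apply; exact: vb.
by have := minimalA_notin_starA vX mX; rewrite in_setC negbK.
Qed.

Lemma starA_starC_minimalA x y : x \in X -> y \in X -> ~~ e x y -> A x :&: C y = set0.
Proof.
move=> xX yX nxy; apply/eqP; rewrite -subset0; apply/subsetP=> t /setIP[tA tC]; exfalso.
case: (eqVneq x y) => [exy|xy].
  by rewrite -exy in tC; move/negP: (starA_notin_starC tA); apply; exact: tC.
have yB : y \in B x.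
  apply/negPn/negP=> yB; move/negP: (minimalA_notin_starA yX xX); apply.
  apply/starAP; split; [by rewrite eq_sym | exact: yB |].
  by apply: contra nxy; apply: touches_starB_adj yB _; rewrite eq_sym.
case/starAP: tA => _ tB tt; move: tC; rewrite starCE => /orP[/eqP ty|/andP[eyt _]].
  by rewrite ty yB in tB.
move/negP: tt; apply; apply/touchesP; exists y; [exact: yB | rewrite esym; exact: eyt].
Qed.

Lemma minimalA_laminar (X1 : {set T}) : X1 \subset X ->
  (forall x y, x \in X1 -> y \in X1 -> ~~ e x y) -> loosely_laminar X1 (star_sep e w).
Proof.
move=> sub ind x y xX1 yX1.
by split; apply: starA_starC_minimalA; rewrite ?(subsetP sub) //; exact: ind.
Qed.

(** * Minimal elements induce a triangle-free graph *)

Hypothesis conn : connected_graph e.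
Hypothesis paw : paw_friendly e.

(* [u] is taken in a heavy component of [G] minus all [N[s]], [s \in S], which lies
   in every [B t], [t \in S]; [p] is where a path from it to [v] leaves it. *)
Lemma starB_common_exit S v k : v \in S -> S \subset ball e v k -> k < d ->
  exists s p u, [/\ s \in S, e s p, p \notin S, e p u & {in S, forall t, u \in B t}].
Proof.
move=> vS Sv kd; pose Y := \bigcup_(s in S) N s.
have YN s : s \in S -> N s \subset Y by move=> sS; apply: bigcup_sup.
have Yv : Y \subset ball e v d.
  apply/bigcupsP=> s sS.
  exact: subset_trans (cnbhd_sub_ball (subsetP Sv s sS)) (ball_mono e v kd).
have [z zY hz] := heavy_comp_exists Yv; pose D := comp (~: Y) z.
have DY : D \subset ~: Y := comp_sub e _ z.
have DB t : t \in S -> D \subset B t.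
  move=> tS; apply: comp_sub_starB hz; first by rewrite inE.
  by apply: subset_trans DY _; rewrite setCS; apply: YN.
have ND y s : s \in S -> y \in N s -> y \notin D.
  by move=> sS yN; apply/negP=> /(subsetP DY); rewrite in_setC (subsetP (YN s sS) y yN).
have vD : v \notin D by apply: ND vS _; rewrite cnbhdE eqxx.
have zD : z \in D by apply: comp_self; rewrite inE.
have [u [p [uD pD eup]]] := connect_exit zD vD (conn z v).
have /bigcupP[s sS pNs] : p \in Y.
  by apply: contraR pD => pY; apply: comp_closed uD _ eup; rewrite inE.
have pS : p \notin S.
  by apply: contraL uD => pS; apply: ND pS _; rewrite cnbhdE esym eup orbT.
exists s, p, u; split; [exact: sS | | exact: pS | by rewrite esym | ].
  by move: pNs; rewrite cnbhdE => /orP[/eqP ps|//]; rewrite ps sS in pS.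
by move=> t tS; apply: (subsetP (DB t tS)).
Qed.

Lemma not_breaks_touching x Y u : u \in B x ->
  {in Y, forall t, touches (B x) t} -> ~ breaks e setT x Y.
Proof.
move=> uB tY /(_ u); have NH : nbhdH e setT x = N x by apply/setP=> t; rewrite !inE.
rewrite NH setTD -(starB_comp uB) in_setC (starB_cnbhd uB) => /(_ isT)/negP; apply.
apply/subsetP=> t /tY /touchesP[y yB ety]; apply/setUP; right.
apply/setIdP; split; first exact: in_setT.
by apply/exists_inP; exists y; [exact: yB | rewrite esym].
Qed.

Lemma paw_common_starB a b1 b2 p u :
  e a b1 -> e a b2 -> e b1 b2 -> e a p -> ~~ e p b1 -> ~~ e p b2 -> e p u ->
  u \in B a -> u \in B b1 -> u \in B b2 ->
  touches (B a) b1 -> touches (B a) b2 -> touches (B b1) b2 -> touches (B b2) b1 ->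
  False.
Proof.
move=> e1 e2 e12 eap n1 n2 epu ua u1 u2 t1 t2 t12 t21.
have tp t : u \in B t -> touches (B t) p by move=> ut; apply/touchesP; exists u.
have pb1 : p != b1 by apply: contraNneq n2 => ->.
have pb2 : p != b2 by apply: contraNneq n1 => ->; rewrite esym.
have un : uniq [:: p; a; b1; b2] by rewrite /= !inE !negb_or pb1 pb2 eq_sym !edge_neq.
case: paw => _ /(_ setT p a b1 b2); rewrite !in_setT => /(_ isT isT isT isT un).
case/(_ e1 e2 e12 eap n1 n2) => [|[|]].
- apply: (not_breaks_touching ua) => t; rewrite !inE -orbA.
  by move/or3P=> -[]/eqP->; [exact: tp ua | exact: t1 | exact: t2].
- apply: (not_breaks_touching u1) => t; rewrite !inE.
  by move/orP=> -[]/eqP->; [exact: tp u1 | exact: t12].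
- apply: (not_breaks_touching u2) => t; rewrite !inE.
  by move/orP=> -[]/eqP->; [exact: tp u2 | exact: t21].
Qed.

Lemma minimalA_paw a b1 b2 p u : b1 \in X -> b2 \in X -> e b1 b2 ->
  e a b1 -> e a b2 -> touches (B b1) a -> touches (B b2) a ->
  e a p -> ~~ e b1 p -> ~~ e b2 p -> e p u ->
  u \in B a -> u \in B b1 -> u \in B b2 -> False.
Proof.
move=> b1X b2X e12 e1 e2 t1 t2 eap n1 n2 epu ua u1 u2.
apply: (paw_common_starB e1 e2 e12 eap _ _ epu ua u1 u2).
- by rewrite esym; exact: n1.
- by rewrite esym; exact: n2.
- by apply: minimalA_touches_back b1X _ t1; rewrite esym.
- by apply: minimalA_touches_back b2X _ t2; rewrite esym.
- exact: minimalA_touches b1X b2X e12.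
- by apply: minimalA_touches b2X b1X _; rewrite esym.
Qed.

Definition clique_nbrs (K : {set T}) v := [set t in K | e t v].

Definition clique_hull (K : {set T}) := [set v | (v \in K) ||
  (1 < #|clique_nbrs K v|) && [forall t in clique_nbrs K v, touches (B t) v]].

Lemma clique_hull_ball K x : x \in K -> is_clique e K -> clique_hull K \subset ball e x 2.
Proof.
move=> xK clK; have K1 : K \subset ball e x 1.
  apply/subsetP=> t tK; case: (eqVneq x t) => [<-|xt].
    exact: (subsetP (ball_mono e x (leqnSn 0))) _ (ball_self e x).
  exact: ball_adj (ball_self e x) (cliqueP clK xK tK xt).
apply/subsetP=> v; rewrite inE => /orP[vK|/andP[/card_gt1P[t [_ [/setIdP[tK etv] _ _]]] _]].
  exact: (subsetP (ball_mono e x (leqnSn 1))) _ (subsetP K1 v vK).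
exact: ball_adj (subsetP K1 t tK) etv.
Qed.

Lemma minimalA_clique_exit_adj K a p u : K \subset X -> is_clique e K -> 2 < #|K| ->
  a \in K -> e a p -> #|clique_nbrs K p| <= 1 -> e p u ->
  {in K, forall t, u \in B t} -> False.
Proof.
move=> KX clK K3 aK eap Kp1 epu uK.
have /card_gt1P[b1 [b2 [/setD1P[b1a b1K] /setD1P[b2a b2K] b12]]] : 1 < #|K :\ a|.
  by rewrite (cardsD1 a K) aK in K3.
have nb t : t \in K -> t != a -> ~~ e t p.
  move=> tK ta; apply: contra ta => etp; move/card_le1_eqP: Kp1 => Kp1.
  by apply/eqP; apply: (Kp1 a t); apply/setIdP; split.
have eK := cliqueP clK.
have aX := subsetP KX a aK; have b1X := subsetP KX b1 b1K; have b2X := subsetP KX b2 b2K.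
have [ab1 ab2] : a != b1 /\ a != b2 by rewrite ![a == _]eq_sym.
apply: (minimalA_paw b1X b2X (eK _ _ b1K b2K b12) (eK _ _ aK b1K ab1) (eK _ _ aK b2K ab2)
  _ _ eap (nb b1 b1K b1a) (nb b2 b2K b2a) epu (uK a aK) (uK b1 b1K) (uK b2 b2K)).
- by apply: minimalA_touches b1X aX _; rewrite esym eK.
- by apply: minimalA_touches b2X aX _; rewrite esym eK.
Qed.

Lemma minimalA_clique_exit_nonadj K s p u : K \subset X -> is_clique e K ->
  s \in clique_hull K -> s \notin K -> e s p -> clique_nbrs K p = set0 -> e p u ->
  u \in B s -> {in K, forall t, u \in B t} -> False.
Proof.
move=> KX clK sH sK esp Kp0 epu us uK.
move: sH; rewrite inE (negbTE sK) => /andP[/card_gt1P[b1 [b2 [b1s b2s b12]]] /forall_inP ts].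
case/setIdP: (b1s) => b1K e1; case/setIdP: (b2s) => b2K e2.
have nb t : t \in K -> ~~ e t p.
  move=> tK; apply/negP=> etp; suff : t \in clique_nbrs K p by rewrite Kp0 in_set0.
  exact/setIdP.
apply: (minimalA_paw (a:=s) (subsetP KX b1 b1K) (subsetP KX b2 b2K)
  (cliqueP clK b1K b2K b12) _ _ (ts b1 b1s) (ts b2 b2s) esp (nb b1 b1K) (nb b2 b2K)
  epu us (uK b1 b1K) (uK b2 b2K)); by rewrite esym.
Qed.

Lemma minimalA_clique_le2 K : 2 < d -> K \subset X -> is_clique e K -> #|K| <= 2.
Proof.
move=> d2 KX clK; rewrite leqNgt; apply/negP=> K3.
have [x xK] : exists x, x \in K by apply/card_gt0P; exact: ltn_trans K3.
have KH : K \subset clique_hull K by apply/subsetP=> t tK; rewrite inE tK.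
have [s [p [u [sH esp pH epu uH]]]] :=
  starB_common_exit (subsetP KH x xK) (clique_hull_ball xK clK) d2.
have uK : {in K, forall t, u \in B t} by move=> t tK; apply: uH; exact: (subsetP KH).
case: (set_0Vmem (clique_nbrs K p)) => [Kp0|[a /setIdP[aK eap]]].
  apply: (minimalA_clique_exit_nonadj KX clK sH _ esp Kp0 epu (uH s sH) uK).
  apply/negP=> sK; suff : s \in clique_nbrs K p by rewrite Kp0 in_set0.
  by apply/setIdP; split.
apply: (minimalA_clique_exit_adj KX clK K3 aK eap _ epu uK).
move: pH; rewrite inE negb_or => /andP[_]; rewrite negb_and -leqNgt => /orP[//|].
case/forall_inPn=> t /setIdP[tK etp] /negP[]; apply/touchesP; exists u; [exact: uK | exact: epu].
Qed.

Lemma minimalA_bipartite : 2 < d -> bipartite e X.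
Proof.
move=> d2; apply: bipartite_of_colorable2.
case: paw => /(_ X) [[f [f_lt f_prop]] _] _; exists f; split; last exact: f_prop.
move=> t tX; apply: leq_trans (f_lt t tX) _.
by apply/bigmax_leqP=> K /andP[KX clK]; exact: minimalA_clique_le2.
Qed.
End StarSeparations.

Unset Implicit Arguments.

Theorem lemma6p1 (R : realType) (c : R) (d delta : nat)
  (T : finType) (e : rel T) (w : T -> R) (O : T -> nat) :
  (2%:R^-1 <= c)%R -> (c < 1)%R ->
  0 < d -> 0 < delta -> delta + 3 <= d ->
  simple_graph e -> connected_graph e -> paw_friendly e ->
  (forall v, degree e v <= delta) -> (exists v, degree e v = delta) ->
  (forall x, 0 <= w x <= 1)%R -> wt w [set: T] = 1%R ->
  (forall X : {set T}, bounded e d X -> ~ balanced_separator e w c X) ->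
  injective O -> (forall x, 1 <= O x <= #|T|) ->
  (forall k, 1 <= k <= #|T| -> exists x, O x = k) ->
  (star_free_bag e w O = minimalA e w O /\ bipartite e (star_free_bag e w O)) /\
  (forall X1 X2 : {set T}, is_bipartition e (star_free_bag e w O) X1 X2 ->
     loosely_laminar X1 (star_sep e w) /\ loosely_laminar X2 (star_sep e w)).
Proof.
move=> c_ge_half _ d_gt0 _ hd [esym eirr] conn paw _ _ w01 wT no_sep O_inj _ _.
have w_ge0 x : (0 <= w x)%R by case/andP: (w01 x).
have d_gt2 : 2 < d := leq_trans (leq_addl delta 3) hd.
rewrite (star_free_bag_minimalA esym w_ge0 wT c_ge_half d_gt0 no_sep O_inj).
split.
  split=> //.
  exact: (minimalA_bipartite esym eirr w_ge0 wT c_ge_half d_gt0 no_sep O_inj conn paw d_gt2).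
move=> X1 X2 [X12 [_ [X1_indep X2_indep]]].
have laminar := minimalA_laminar esym w_ge0 wT c_ge_half d_gt0 no_sep O_inj.
by split; apply: laminar; rewrite -?X12 ?subsetUl ?subsetUr.
Qed.
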